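(* Let $G$ be a finite directed graph with vertex set $V$, edge set $E$ and signed incidence matrix $M$, and let $H\subseteq E$. Suppose that for every $e\in H$ there exists $z_e\in\mathbb Z_{\ge0}^E$ supported in $H$ with $e+z_e\in\operatorname{Row}(M)\cap\mathbb Z^E$. Then there is an ordered partition $V=V_1\sqcup\dots\sqcup V_s$ with respect to which $H$ is a cut subgraph and the orientation of $H$ induced from $G$ is coherent acyclic.
   Context: The signed incidence matrix has rows indexed by vertices and columns by edges, with entry $-1$ if $e$ points away from $v$, $+1$ if $e$ points towards $v$, and $0$ if $e$ is a loop or not incident to $v$; $\mathbb R^E$ has standard basis $\{e\}_{e\in E}$. A subset $H\subseteq E$ is a cut subgraph with respect to an ordered partition $V=V_1\sqcup\dots\sqcup V_s$ if the edges of $H$ are exactly the edges of $G$ whose endpoints lie in different parts. The orientation of $H$ is coherent acyclic (with respect to the partition) if every edge $(u,v)\in H$ has $u\in V_i$, $v\in V_j$ with $i<j$. *)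

From mathcomp Require Import all_boot all_order all_algebra.
Set Implicit Arguments. Unset Strict Implicit. Unset Printing Implicit Defensive.
Import Order.TTheory GRing.Theory Num.Theory.
Local Open Scope ring_scope.

(* A finite directed graph: finite vertex type V, finite edge type E,
   each edge e goes from [src e] to [tgt e] (loops and parallel edges allowed). *)

Definition incidence (V E : finType) (src tgt : E -> V) (v : V) (e : E) : int :=
  if src e == tgt e then 0
  else if src e == v then -1
  else if tgt e == v then 1
  else 0.

(* x : Z^E lies in the row space of M (over Q; rational = real row space on Z^E). *)
Definition in_row_space (V E : finType) (src tgt : E -> V) (x : E -> int) : Prop :=
  exists y : V -> rat,
    forall e : E, (x e)%:~R = \sum_(v : V) y v * (incidence src tgt v e)%:~R.

Definition basis_vec (E : finType) (e : E) : E -> int := fun f => (f == e)%:R.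

(* H is a cut subgraph w.r.t. the ordered partition given by p : V -> 'I_s
   (V_i = p^-1(i)) *)
Definition is_cut_subgraph (V E : finType) (src tgt : E -> V) (H : {set E})
  (s : nat) (p : V -> 'I_s) : Prop :=
  forall e : E, e \in H <-> p (src e) != p (tgt e).

Definition coherent_acyclic (V E : finType) (src tgt : E -> V) (H : {set E})
  (s : nat) (p : V -> 'I_s) : Prop :=
  forall e : E, e \in H -> (p (src e) < p (tgt e))%N.

From mathcomp Require Import all_boot all_order all_algebra.
Import Order.TTheory GRing.Theory Num.Theory.
Local Open Scope ring_scope.
Set Implicit Arguments. Unset Strict Implicit.

(* The row space of the incidence matrix consists of the potential differences
   [x e = y (tgt e) - y (src e)]. Adding up the certificates [e + z_e] over all
   [e] in [H] gives a row-space vector that vanishes off [H] and is positive on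
   [H]; its potential [Y] is constant along the edges outside [H] and strictly
   increases along the edges of [H]. Grouping the vertices by the value of [Y],
   in increasing order, gives the required ordered partition. *)

Section IncidenceRowSpace.

Variables (V E : finType) (src tgt : E -> V).

Lemma incidence_ratE v e :
  ((incidence src tgt v e)%:~R : rat) = (v == tgt e)%:R - (v == src e)%:R.
Proof.
rewrite /incidence; have [st|nst] := eqVneq (src e) (tgt e).
  by rewrite st subrr.
have [sv|nsv] := eqVneq (src e) v; first by rewrite -sv (negbTE nst) sub0r.
by rewrite subr0 eq_sym; case: (v == tgt e).
Qed.

Lemma sum_mul_incidence (y : V -> rat) e :
  \sum_(v : V) y v * (incidence src tgt v e)%:~R = y (tgt e) - y (src e).
Proof.
have pick_pt a : \sum_(v : V) y v * (v == a)%:R = y a.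
  by under eq_bigr => v _ do rewrite mulr_natr mulrb; rewrite -big_mkcond big_pred1_eq.
by under eq_bigr => v _ do rewrite incidence_ratE mulrBr; rewrite sumrB !pick_pt.
Qed.

Lemma in_row_spaceP (x : E -> int) :
  in_row_space src tgt x <->
  exists y : V -> rat, forall e, (x e)%:~R = y (tgt e) - y (src e).
Proof.
by split=> -[y hy]; exists y => e; rewrite hy ?sum_mul_incidence.
Qed.

Lemma in_row_space_sum (I : finType) (A : {pred I}) (x : I -> E -> int) :
  (forall i, i \in A -> in_row_space src tgt (x i)) ->
  in_row_space src tgt (fun e => \sum_(i in A) x i e).
Proof.
move=> xA; have /fin_all_exists [y hy] i : exists y : V -> rat,
    i \in A -> forall e, (x i e)%:~R = y (tgt e) - y (src e).
  by case: (boolP (i \in A)) => [/xA /in_row_spaceP [y hy]|_]; [exists y | exists (fun=> 0)].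
apply/in_row_spaceP; exists (fun v => \sum_(i in A) y i v) => e.
by rewrite rmorph_sum -sumrB; apply: eq_bigr => i iA; exact: hy.
Qed.

Lemma cut_potential (H : {set E}) :
  (forall e : E, e \in H ->
     exists z : E -> nat,
       (forall f : E, f \notin H -> z f = 0%N) /\
       in_row_space src tgt (fun f => basis_vec e f + (z f)%:Z)) ->
  exists Y : V -> rat,
    (forall f, f \notin H -> Y (tgt f) = Y (src f)) /\
    (forall f, f \in H -> Y (src f) < Y (tgt f)).
Proof.
move=> cert; have /fin_all_exists [z hz] e : exists z : E -> nat, e \in H ->
    (forall f, f \notin H -> z f = 0%N) /\
    in_row_space src tgt (fun f => basis_vec e f + (z f)%:Z).
  by case: (boolP (e \in H)) => [/cert [z hz]|_]; [exists z | exists (fun=> 0%N)].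
pose x f := \sum_(e in H) (basis_vec e f + (z e f)%:Z).
have [Y hY] : exists Y : V -> rat, forall f, (x f)%:~R = Y (tgt f) - Y (src f).
  by apply/in_row_spaceP/in_row_space_sum => e /hz [].
have x_out f : f \notin H -> x f = 0.
  move=> fH; apply: big1 => e eH; have [z0 _] := hz e eH.
  by rewrite /basis_vec z0 // eq_sym (negbTE (memPn fH e eH)).
have x_in f : f \in H -> 0 < x f.
  move=> fH; rewrite /x (bigD1 f) //= /basis_vec eqxx.
  apply: ltr_wpDr; first by apply: sumr_ge0 => e _; rewrite addr_ge0.
  by rewrite ltr_pwDl.
exists Y; split=> f fH.
  by apply/eqP; rewrite -subr_eq0 -hY x_out.
by rewrite -subr_gt0 -hY ltr0z x_in.
Qed.

End IncidenceRowSpace.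

Lemma index_lt_sorted (d : Order.disp_t) (T : orderType d) (s : seq T) a b :
  sorted <%O s -> a \in s -> b \in s -> (index a s < index b s)%N = (a < b)%O.
Proof.
move=> s_lt a_s b_s; have idx_lt := sorted_ltn_index lt_trans s_lt.
case: ltngtP => [/idx_lt -> //|/idx_lt /lt_gtF -> //|/(index_inj a a_s b_s) ->].
by rewrite ltxx.
Qed.

Lemma rank_embedding (d : Order.disp_t) (T : orderType d) (V : finType) (Y : V -> T) :
  exists (s : nat) (p : V -> 'I_s),
    (forall i : 'I_s, exists v : V, p v = i) /\
    forall u v, (p u < p v)%N = (Y u < Y v)%O.
Proof.
pose vals := sort <=%O (undup [seq Y v | v <- enum V]).
have vals_lt : sorted <%O vals by rewrite sort_lt_sorted undup_uniq.
have Y_vals v : Y v \in vals by rewrite mem_sort mem_undup map_f ?mem_enum.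
have idx_lt v : (index (Y v) vals < size vals)%N by rewrite index_mem.
exists (size vals), (fun v => Ordinal (idx_lt v)).
split=> [i|u v]; last exact: index_lt_sorted.
have /hasP [x0 _ _] : has predT vals by rewrite has_predT (leq_ltn_trans _ (ltn_ord i)).
have /mapP [v _ Ev] : nth x0 vals i \in [seq Y v | v <- enum V].
  by rewrite -mem_undup -(mem_sort <=%O) mem_nth.
exists v; apply: val_inj => /=.
by rewrite -Ev index_uniq // (sorted_uniq lt_trans ltxx vals_lt).
Qed.

Theorem mainTheorem20 (V E : finType) (src tgt : E -> V) (H : {set E}) :
  (forall e : E, e \in H ->
     exists z : E -> nat,
       (forall f : E, f \notin H -> z f = 0%N) /\
       in_row_space src tgt (fun f => basis_vec e f + (z f)%:Z)) ->
  exists (s : nat) (p : V -> 'I_s),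
    (forall i : 'I_s, exists v : V, p v = i) /\
    is_cut_subgraph src tgt H p /\
    coherent_acyclic src tgt H p.
Proof.
move=> cert; have [Y [Y_out Y_in]] := cut_potential cert.
have [s [p [p_surj p_mono]]] := rank_embedding Y.
have p_neq u v : (p u != p v) = (Y u != Y v).
  by rewrite -(inj_eq val_inj) neq_ltn neq_lt !p_mono.
exists s, p; split; [done | split=> f; last by rewrite p_mono; apply: Y_in].
rewrite p_neq; split=> [/Y_in|]; first by rewrite lt_neqAle => /andP [].
by apply: contraNT => /Y_out ->.
Qed.
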